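(* Let $m\ge 1$ and $1\le k_1<k_2$ be integers with $k_1+1-m>0$, and let $L>0$, $C_{k_1}>0$, $C_{k_2}>0$ be real constants. For $h>0$ and $i=1,2$ set $$\beta_{k_i}(h)=\min\left(L,\;C_{k_i}h^{k_i+1-m}\right),$$ and let $X^{(k_1)}$, $X^{(k_2)}$ be independent random variables with $X^{(k_i)}$ uniformly distributed on $[0,\beta_{k_i}(h)]$. Define $$h^*_{k_1,k_2}=\left(\frac{C_{k_1}}{C_{k_2}}\right)^{\frac{1}{k_2-k_1}},\qquad \hslash_{k_i}=\left(\frac{L}{C_{k_i}}\right)^{\frac{1}{k_i+1-m}}\ (i=1,2),$$ and $\mathcal{P}_{k_1,k_2}(h)=\mathrm{Prob}\{X^{(k_1)}\le X^{(k_2)}\}$. Then: (i) If $h^*_{k_1,k_2}\ge\max(\hslash_{k_1},\hslash_{k_2})$, then $\hslash_{k_1}\le\hslash_{k_2}$ and $$\mathcal{P}_{k_1,k_2}(h)=\begin{cases}\dfrac12\left(\dfrac{h}{h^*_{k_1,k_2}}\right)^{k_2-k_1} & \text{if } 0< h\le\hslash_{k_1},\\[2mm] \dfrac12\left(\dfrac{h}{\hslash_{k_2}}\right)^{k_2+1-m} & \text{if } \hslash_{k_1}\le h\le\hslash_{k_2},\\[2mm] \dfrac12 & \text{if } h\ge\hslash_{k_2}.\end{cases}$$ (ii) If $h^*_{k_1,k_2}\le\min(\hslash_{k_1},\hslash_{k_2})$, then $\hslash_{k_2}\le\hslash_{k_1}$ and $$\mathcal{P}_{k_1,k_2}(h)=\begin{cases}\dfrac12\left(\dfrac{h}{h^*_{k_1,k_2}}\right)^{k_2-k_1}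 & \text{if } 0< h\le h^*_{k_1,k_2},\\[2mm] 1-\dfrac12\left(\dfrac{h^*_{k_1,k_2}}{h}\right)^{k_2-k_1} & \text{if } h^*_{k_1,k_2}\le h\le\hslash_{k_2},\\[2mm] 1-\dfrac12\left(\dfrac{h}{\hslash_{k_1}}\right)^{k_1+1-m} & \text{if } \hslash_{k_2}\le h\le\hslash_{k_1},\\[2mm] \dfrac12 & \text{if } h\ge\hslash_{k_1}.\end{cases}$$
   Context: In the paper, $h$ is the mesh size of a finite element mesh, $X^{(k_i)}=\|u-u_h^{(k_i)}\|_{m,p,\Omega}$ is the $W^{m,p}$ error of the $P_{k_i}$ Lagrange finite element approximation of the solution $u$ of a variational problem, $L=\|l\|_{V'}/\alpha^*$ comes from a priori stability bounds, and $C_{k_i}=\mathscr{C}_{k_i}|u|_{k_i+1,p,\Omega}$ comes from the interpolation error estimate, so that $\beta_{k_i}(h)$ is the resulting upper bound on the error; the two errors are modeled as independent uniform random variables on $[0,\beta_{k_i}(h)]$. *)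

From HB Require Import structures.
From mathcomp Require Import all_boot all_order all_algebra.
From mathcomp Require Import all_classical all_reals all_analysis.
Set Implicit Arguments. Unset Strict Implicit. Unset Printing Implicit Defensive.
Import Order.TTheory GRing.Theory Num.Theory.
Local Open Scope classical_set_scope.
Local Open Scope ring_scope.

Definition indep2 {R : realType} {d : measure_display} {T : measurableType d}
  (P : probability T R) (X Y : {RV P >-> R}) : Prop :=
  forall A B : set R, measurable A -> measurable B ->
    P (X @^-1` A `&` Y @^-1` B) = (P (X @^-1` A) * P (Y @^-1` B))%E.

Definition is_uniform {R : realType} {d : measure_display} {T : measurableType d}
  (P : probability T R) (X : {RV P >-> R}) (a b : R) : Prop :=
  forall A : set R, measurable A ->
    distribution P X A = (\int[lebesgue_measure]_(x in A) (uniform_pdf a b x)%:E)%E.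

Definition beta {R : realType} (L C : R) (k m : nat) (h : R) : R :=
  Num.min L (C * h ^+ (k + 1 - m)).

Definition hstar {R : realType} (C1 C2 : R) (k1 k2 : nat) : R :=
  (C1 / C2) `^ (1 / (k2 - k1)%:R).

Definition hbar {R : realType} (L C : R) (k m : nat) : R :=
  (L / C) `^ (1 / (k + 1 - m)%:R).

Definition probLe {R : realType} {d : measure_display} {T : measurableType d}
  (P : probability T R) (X Y : {RV P >-> R}) : \bar R :=
  P [set w | X w <= Y w].

From HB Require Import structures.
From mathcomp Require Import all_boot all_order all_algebra.
From mathcomp Require Import all_classical all_reals all_analysis.
From mathcomp Require Import ring zify measurable_realfun.

(** By independence the joint law of (X1, X2) is the product of the two
    uniform laws on [0, a] and [0, b], so integrating the sections of
    {x <= y} gives P(X1 <= X2) = a^-1 * \int_0^(min a b) (b - x) / b dx,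
    i.e. b / 2a if b <= a and 1 - a / 2b if a <= b.  With a = beta_k1(h)
    and b = beta_k2(h), the thresholds hbar_k1, hbar_k2 and h* are exactly
    the values of h at which C_k1 h^(k1+1-m) = L, C_k2 h^(k2+1-m) = L and
    C_k2 h^(k2+1-m) = C_k1 h^(k1+1-m); on each range of h this resolves both
    minima and the comparison of a with b.  The identity
    hbar_k2^(k2+1-m) = hbar_k1^(k1+1-m) * h*^(k2-k1) orders the thresholds. *)

Set Implicit Arguments.
Unset Strict Implicit.
Unset Printing Implicit Defensive.
Import numFieldNormedType.Exports.
Import Order.TTheory GRing.Theory Num.Theory.
Local Open Scope classical_set_scope.
Local Open Scope ring_scope.

Lemma EFin_eqE {R : numDomainType} (x y : R) : (x%:E = y%:E) = (x = y).
Proof. by apply/propext; split=> [[]|->]. Qed.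

Lemma ler_pMXn2l {R : realFieldType} (c x y : R) (k : nat) :
  0 < c -> (0 < k)%N -> 0 <= x -> 0 <= y ->
  (c * x ^+ k <= c * y ^+ k) = (x <= y).
Proof. by move=> c0 k0 x0 y0; rewrite ler_pM2l // ler_pXn2r. Qed.

Lemma powR_rootK {R : realType} (x : R) (n : nat) : 0 <= x -> (0 < n)%N ->
  (x `^ (1 / n%:R)) ^+ n = x.
Proof.
move=> x0 n0; rewrite -powR_mulrn ?powR_ge0 // -powRrM mul1r mulVf ?powRr1 //.
by rewrite pnatr_eq0 -lt0n.
Qed.

Definition uniform_le_prob {R : realFieldType} (a b : R) : R :=
  if b <= a then b / (2 * a) else 1 - a / (2 * b).

Lemma uniform_le_prob_ge {R : realFieldType} (a b : R) :
  b <= a -> uniform_le_prob a b = b / (2 * a).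
Proof. by move=> ba; rewrite /uniform_le_prob ba. Qed.

Lemma uniform_le_prob_le {R : realFieldType} (a b : R) :
  0 < a -> a <= b -> uniform_le_prob a b = 1 - a / (2 * b).
Proof.
rewrite /uniform_le_prob => a0 ab; case: ifPn => // ba.
have -> : b = a by apply/le_anti; rewrite ab ba.
by field; rewrite gt_eqF.
Qed.

Section uniform_comparison.
Context {R : realType}.

Lemma integral_deriv_horner (p : {poly R}) (a b : R) : a < b ->
  (\int[lebesgue_measure]_(x in `[a, b]) (p^`()).[x]%:E = (p.[b] - p.[a])%:E)%E.
Proof.
move=> ab; rewrite (@continuous_FTC2 _ _ (horner p)) ?EFinB //.
- by apply: continuous_in_subspaceT => x _; exact: continuous_horner.
- split; first by move=> x _; exact: derivable_horner.
  + exact/cvg_at_right_filter/continuous_horner.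
  + exact/cvg_at_left_filter/continuous_horner.
- by move=> x _; rewrite -derivE.
Qed.

Lemma integral_uniform_survival (b c : R) : 0 < b -> 0 < c ->
  (\int[lebesgue_measure]_(x in `[0%R, c]) ((b - x) / b)%:E =
   (c - c ^+ 2 / (2 * b))%:E)%E.
Proof.
move=> b0 c0; pose p : {poly R} := 'X - (2 * b)^-1 *: 'X^2.
have -> : (fun x => ((b - x) / b)%:E) = (fun x => (p^`()).[x]%:E).
  apply/funext => x; rewrite /p derivB derivZ derivX derivXn !hornerE.
  by congr EFin; field; rewrite gt_eqF.
rewrite integral_deriv_horner // /p !hornerE /= !mulr0 oppr0 subr0.
by congr EFin; field; rewrite gt_eqF.
Qed.

Lemma uniform_prob_itvcy (a b x : R) (ab : a < b) : a <= x ->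
  uniform_prob ab `[x, +oo[ = (if x <= b then (b - x) / (b - a) else 0)%:E.
Proof.
move=> ax; rewrite /uniform_prob integral_uniform_pdf.
case: ifPn => [xb|/negP xb]; last first.
  rewrite (_ : _ `&` _ = set0) ?integral_set0 //.
  apply/seteqP; split => // y /=; rewrite !in_itv/= andbT => -[xy /andP[_ yb]].
  by apply: xb; exact: le_trans yb.
have -> : `[x, +oo[%classic `&` `[a, b]%classic = `[x, b]%classic :> set R.
  apply/seteqP; split => y /=; rewrite !in_itv/= ?andbT.
    by move=> [-> /andP[_ ->]].
  by move=> /andP[xy ->]; rewrite xy (le_trans ax xy).
rewrite (eq_integral (fun=> (b - a)^-1%:E)); last first.
  move=> y; rewrite inE /= in_itv /= => /andP[xy yb].
  by rewrite /uniform_pdf (le_trans ax xy) yb.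
rewrite integral_cst //= lebesgue_measure_itv /= lte_fin.
case: ltP => [xb'|bx]; first by rewrite -EFinD -EFinM mulrC.
by rewrite (@le_anti _ _ x b) ?xb ?bx // subrr mul0r mule0.
Qed.

Lemma measurable_fst_le_snd : measurable [set z : R * R | z.1 <= z.2].
Proof.
have := measurable_fun_ler (@measurable_fst _ _ R R) (@measurable_snd _ _ R R).
by move=> /(_ measurableT [set true]); rewrite setTI; apply.
Qed.

Lemma product_uniform_le (a b : R) (ha : 0 < a) (hb : 0 < b) :
  (uniform_prob ha \x uniform_prob hb)%E [set z | z.1 <= z.2] =
  (uniform_le_prob a b)%:E.
Proof.
rewrite /product_measure1 integral_uniform //; last first.
  exact: (measurable_fun_xsection (uniform_prob hb) measurable_fst_le_snd).
rewrite subr0; under eq_integral => x.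
  rewrite inE /= in_itv /= => /andP[x0 _].
  rewrite (_ : xsection _ x = `[x, +oo[%classic); last first.
    by apply/seteqP; split => y; rewrite /xsection /= in_itv /= andbT inE.
  by rewrite (uniform_prob_itvcy hb x0) subr0; over.
transitivity ((a^-1)%:E *
  \int[lebesgue_measure]_(x in `[0%R, Num.min a b]) ((b - x) / b)%:E)%E.
  congr (_ * _)%E; rewrite [LHS]integral_mkcond [RHS]integral_mkcond.
  apply: eq_integral => x _; rewrite !patchE !mem_setE !in_itv /= le_min.
  by case: (0 <= x); case: (x <= a); case: (x <= b).
rewrite integral_uniform_survival ?lt_min ?ha ?hb // -EFinM /uniform_le_prob.
by congr EFin; case: leP => _; field; rewrite !gt_eqF.
Qed.

End uniform_comparison.

Section joint_law.
Context {R : realType} {d : measure_display} {T : measurableType d}.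
Variables (P : probability T R) (X Y : {RV P >-> R}).

(* The uniform laws are measures on [measurableTypeR R]; typing the pair
   there lets its law be compared with their product. *)
Definition pair_RV (w : T) : measurableTypeR R * measurableTypeR R :=
  (X w, Y w).

Lemma measurable_pair_RV : measurable_fun setT pair_RV.
Proof.
by apply: measurable_fun_pair;
  [exact: (measurable_funPT X)|exact: (measurable_funPT Y)].
Qed.

HB.instance Definition _ :=
  isMeasurableFun.Build _ _ _ _ pair_RV measurable_pair_RV.

Lemma indep2_distribution_pair
    (mu nu : {sigma_finite_measure set (measurableTypeR R) -> \bar R}) :
  indep2 X Y ->
  (forall A, measurable A -> distribution P X A = mu A) ->
  (forall B, measurable B -> distribution P Y B = nu B) ->
  forall S, measurable S -> distribution P pair_RV S = (mu \x nu)%E S.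
Proof.
move=> XY muX nuY S mS.
rewrite (product_measure_unique (m' := distribution P pair_RV)) //.
move=> A B mA mB.
by rewrite -muX // -nuY // -XY.
Qed.

Lemma probLe_uniform (a b : R) (ha : 0 < a) (hb : 0 < b) :
  indep2 X Y -> is_uniform X 0 a -> is_uniform Y 0 b ->
  probLe X Y = (uniform_le_prob a b)%:E.
Proof.
move=> XY uX uY; rewrite -(product_uniform_le ha hb).
apply: (indep2_distribution_pair XY); last exact: measurable_fst_le_snd.
- by move=> A mA; rewrite uX.
- by move=> B mB; rewrite uY.
Qed.

End joint_law.

Section error_regimes.
Context {R : realFieldType}.
Variables (p n : nat) (L C1 C2 hs hb1 hb2 h : R).
Hypotheses (p_gt0 : (0 < p)%N) (n_gt0 : (0 < n)%N).
Hypotheses (L_gt0 : 0 < L) (C1_gt0 : 0 < C1) (C2_gt0 : 0 < C2).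
Hypotheses (hs_gt0 : 0 < hs) (hb1_gt0 : 0 < hb1) (hb2_gt0 : 0 < hb2).
Hypotheses (hsE : C2 * hs ^+ n = C1) (hb1E : C1 * hb1 ^+ p = L).
Hypothesis hb2E : C2 * hb2 ^+ (p + n) = L.
Hypothesis h_gt0 : 0 < h.

Let pn_gt0 : (0 < p + n)%N. Proof. by rewrite addn_gt0 p_gt0. Qed.
Let h_ge0 : 0 <= h. Proof. exact: ltW. Qed.
Let hs_ge0 : 0 <= hs. Proof. exact: ltW. Qed.
Let hb1_ge0 : 0 <= hb1. Proof. exact: ltW. Qed.
Let hb2_ge0 : 0 <= hb2. Proof. exact: ltW. Qed.

Lemma hb2_exprE : hb2 ^+ (p + n) = hb1 ^+ p * hs ^+ n.
Proof.
apply: (mulfI (lt0r_neq0 C2_gt0)); rewrite hb2E -hb1E -hsE.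
by rewrite -mulrA [_ * hb1 ^+ p]mulrC.
Qed.

Lemma hb1_le_hb2 : hb1 <= hs -> hb1 <= hb2.
Proof.
move=> hb1_hs; rewrite -(ler_pXn2r pn_gt0) ?nnegrE // hb2_exprE exprD.
by rewrite ler_pM2l ?exprn_gt0 // ler_pXn2r.
Qed.

Lemma hb2_le_hb1 : hs <= hb1 -> hb2 <= hb1.
Proof.
move=> hs_hb1; rewrite -(ler_pXn2r pn_gt0) ?nnegrE // hb2_exprE exprD.
by rewrite ler_pM2l ?exprn_gt0 // ler_pXn2r.
Qed.

Lemma le_L_hb1 : (C1 * h ^+ p <= L) = (h <= hb1).
Proof. by rewrite -hb1E ler_pMXn2l. Qed.

Lemma ge_L_hb1 : (L <= C1 * h ^+ p) = (hb1 <= h).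
Proof. by rewrite -hb1E ler_pMXn2l. Qed.

Lemma le_L_hb2 : (C2 * h ^+ (p + n) <= L) = (h <= hb2).
Proof. by rewrite -hb2E ler_pMXn2l. Qed.

Lemma ge_L_hb2 : (L <= C2 * h ^+ (p + n)) = (hb2 <= h).
Proof. by rewrite -hb2E ler_pMXn2l. Qed.

Lemma le_hs : (C2 * h ^+ (p + n) <= C1 * h ^+ p) = (h <= hs).
Proof.
rewrite -hsE exprD mulrCA [X in _ <= X]mulrC.
by rewrite ler_pM2l ?exprn_gt0 // ler_pMXn2l.
Qed.

Lemma ge_hs : (C1 * h ^+ p <= C2 * h ^+ (p + n)) = (hs <= h).
Proof.
rewrite -hsE exprD mulrCA [X in X <= _]mulrC.
by rewrite ler_pM2l ?exprn_gt0 // ler_pMXn2l.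
Qed.

Let a := Num.min L (C1 * h ^+ p).
Let b := Num.min L (C2 * h ^+ (p + n)).

Lemma uniform_le_prob_below : h <= hb1 -> h <= hb2 -> h <= hs ->
  uniform_le_prob a b = 2^-1 * (h / hs) ^+ n.
Proof.
move=> h_hb1 h_hb2 h_hs; rewrite /a /b !min_r ?le_L_hb1 ?le_L_hb2 //.
rewrite uniform_le_prob_ge ?le_hs // expr_div_n exprD -hsE.
by field; rewrite !gt_eqF ?exprn_gt0.
Qed.

Lemma uniform_le_prob_above : hb1 <= h -> hb2 <= h ->
  uniform_le_prob a b = 2^-1.
Proof.
move=> hb1_h hb2_h; rewrite /a /b !min_l ?ge_L_hb1 ?ge_L_hb2 //.
by rewrite uniform_le_prob_ge //; field; rewrite gt_eqF.
Qed.

Lemma uniform_le_prob_hb1_hb2 : hb1 <= h -> h <= hb2 ->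
  uniform_le_prob a b = 2^-1 * (h / hb2) ^+ (p + n).
Proof.
move=> hb1_h h_hb2; rewrite /a /b min_l ?ge_L_hb1 // min_r ?le_L_hb2 //.
rewrite uniform_le_prob_ge ?le_L_hb2 // expr_div_n -hb2E.
by field; rewrite !gt_eqF ?exprn_gt0.
Qed.

Lemma uniform_le_prob_hs_hb2 : hs <= h -> h <= hb1 -> h <= hb2 ->
  uniform_le_prob a b = 1 - 2^-1 * (hs / h) ^+ n.
Proof.
move=> hs_h h_hb1 h_hb2; rewrite /a /b !min_r ?le_L_hb1 ?le_L_hb2 //.
rewrite uniform_le_prob_le ?ge_hs ?mulr_gt0 ?exprn_gt0 //.
rewrite expr_div_n exprD -hsE.
by field; rewrite !gt_eqF ?exprn_gt0.
Qed.

Lemma uniform_le_prob_hb2_hb1 : hb2 <= h -> h <= hb1 ->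
  uniform_le_prob a b = 1 - 2^-1 * (h / hb1) ^+ p.
Proof.
move=> hb2_h h_hb1; rewrite /a /b min_r ?le_L_hb1 // min_l ?ge_L_hb2 //.
rewrite uniform_le_prob_le ?le_L_hb1 ?mulr_gt0 ?exprn_gt0 //.
rewrite expr_div_n -hb1E.
by field; rewrite !gt_eqF ?exprn_gt0.
Qed.

Lemma uniform_le_prob_regimes :
  (Num.max hb1 hb2 <= hs ->
     hb1 <= hb2
     /\ (h <= hb1 -> uniform_le_prob a b = 2^-1 * (h / hs) ^+ n)
     /\ (hb1 <= h <= hb2 -> uniform_le_prob a b = 2^-1 * (h / hb2) ^+ (p + n))
     /\ (hb2 <= h -> uniform_le_prob a b = 2^-1))
  /\
  (hs <= Num.min hb1 hb2 ->
     hb2 <= hb1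
     /\ (h <= hs -> uniform_le_prob a b = 2^-1 * (h / hs) ^+ n)
     /\ (hs <= h <= hb2 -> uniform_le_prob a b = 1 - 2^-1 * (hs / h) ^+ n)
     /\ (hb2 <= h <= hb1 -> uniform_le_prob a b = 1 - 2^-1 * (h / hb1) ^+ p)
     /\ (hb1 <= h -> uniform_le_prob a b = 2^-1)).
Proof.
split.
- rewrite ge_max => /andP[hb1_hs hb2_hs]; have hb12 := hb1_le_hb2 hb1_hs.
  split=> //; split; [|split].
  + move=> h_hb1; apply: uniform_le_prob_below => //; exact: le_trans h_hb1 _.
  + by move=> /andP[]; exact: uniform_le_prob_hb1_hb2.
  + by move=> hb2_h; apply: uniform_le_prob_above => //; exact: le_trans hb2_h.
- rewrite le_min => /andP[hs_hb1 hs_hb2]; have hb21 := hb2_le_hb1 hs_hb1.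
  split=> //; split; [|split; [|split]].
  + move=> h_hs; apply: uniform_le_prob_below => //; exact: le_trans h_hs _.
  + move=> /andP[hs_h h_hb2]; apply: uniform_le_prob_hs_hb2 => //.
    exact: le_trans h_hb2 _.
  + by move=> /andP[]; exact: uniform_le_prob_hb2_hb1.
  + by move=> hb1_h; apply: uniform_le_prob_above => //; exact: le_trans hb1_h.
Qed.

End error_regimes.

Section error_bound_parameters.
Context {R : realType}.

Lemma beta_gt0 (L C h : R) (k m : nat) :
  0 < L -> 0 < C -> 0 < h -> 0 < beta L C k m h.
Proof. by move=> L0 C0 h0; rewrite lt_min L0 mulr_gt0 ?exprn_gt0. Qed.

Lemma hstar_gt0 (C1 C2 : R) (k1 k2 : nat) :
  0 < C1 -> 0 < C2 -> 0 < hstar C1 C2 k1 k2.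
Proof. by move=> C10 C20; rewrite powR_gt0 // divr_gt0. Qed.

Lemma hbar_gt0 (L C : R) (k m : nat) : 0 < L -> 0 < C -> 0 < hbar L C k m.
Proof. by move=> L0 C0; rewrite powR_gt0 // divr_gt0. Qed.

Lemma hstar_exprE (C1 C2 : R) (k1 k2 : nat) :
  0 < C1 -> 0 < C2 -> (k1 < k2)%N ->
  C2 * hstar C1 C2 k1 k2 ^+ (k2 - k1) = C1.
Proof.
move=> C10 C20 k12.
rewrite powR_rootK ?subn_gt0 ?divr_ge0 ?(ltW C10) ?(ltW C20) //.
by rewrite mulrC divfK // gt_eqF.
Qed.

Lemma hbar_exprE (L C : R) (k m : nat) :
  0 < L -> 0 < C -> (m < k + 1)%N ->
  C * hbar L C k m ^+ (k + 1 - m) = L.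
Proof.
move=> L0 C0 mk.
rewrite powR_rootK ?subn_gt0 ?divr_ge0 ?(ltW L0) ?(ltW C0) //.
by rewrite mulrC divfK // gt_eqF.
Qed.

End error_bound_parameters.

Theorem theorem2 (R : realType) (m k1 k2 : nat) (L C1 C2 h : R)
  (d : measure_display) (T : measurableType d) (P : probability T R)
  (X1 X2 : {RV P >-> R}) :
  (1 <= m)%N -> (1 <= k1)%N -> (k1 < k2)%N -> (m < k1 + 1)%N ->
  0 < L -> 0 < C1 -> 0 < C2 -> 0 < h ->
  indep2 X1 X2 ->
  is_uniform X1 0 (beta L C1 k1 m h) ->
  is_uniform X2 0 (beta L C2 k2 m h) ->
  let hs := hstar C1 C2 k1 k2 in
  let hb1 := hbar L C1 k1 m in
  let hb2 := hbar L C2 k2 m in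
  let Pk := probLe X1 X2 in
  (Num.max hb1 hb2 <= hs ->
     hb1 <= hb2
     /\ (h <= hb1 -> Pk = (2^-1 * (h / hs) ^+ (k2 - k1))%:E)
     /\ (hb1 <= h <= hb2 -> Pk = (2^-1 * (h / hb2) ^+ (k2 + 1 - m))%:E)
     /\ (hb2 <= h -> Pk = (2^-1)%:E))
  /\
  (hs <= Num.min hb1 hb2 ->
     hb2 <= hb1
     /\ (h <= hs -> Pk = (2^-1 * (h / hs) ^+ (k2 - k1))%:E)
     /\ (hs <= h <= hb2 -> Pk = (1 - 2^-1 * (hs / h) ^+ (k2 - k1))%:E)
     /\ (hb2 <= h <= hb1 -> Pk = (1 - 2^-1 * (h / hb1) ^+ (k1 + 1 - m))%:E)
     /\ (hb1 <= h -> Pk = (2^-1)%:E)).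
Proof.
move=> _ _ k12 mk1 L_gt0 C1_gt0 C2_gt0 h_gt0 X12 uX1 uX2 hs hb1 hb2 Pk.
have mk2 : (m < k2 + 1)%N by lia.
have k2E : (k2 + 1 - m = (k1 + 1 - m) + (k2 - k1))%N by lia.
have hb2E := hbar_exprE L_gt0 C2_gt0 mk2; rewrite k2E in hb2E.
rewrite /Pk (probLe_uniform (beta_gt0 _ _ L_gt0 C1_gt0 h_gt0)
  (beta_gt0 _ _ L_gt0 C2_gt0 h_gt0) X12 uX1 uX2) /beta k2E !EFin_eqE.
apply: uniform_le_prob_regimes => //;
  by rewrite ?subn_gt0 ?hstar_gt0 ?hbar_gt0 ?hstar_exprE ?hbar_exprE.
Qed.
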